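(* Let $X=\{F=0\}\subset\mathbb{P}^n$ be a Frobenius nonclassical hypersurface over $\mathbb{F}_q$ which is irreducible over $\mathbb{F}_q$ and contains an $\mathbb{F}_q$-point at which $X$ is smooth. Then $X$ is geometrically irreducible.
   Context: $X$ is Frobenius nonclassical if $F$ divides $\sum_{i=0}^n x_i^q\frac{\partial F}{\partial x_i}$. *)

From HB Require Import structures.
From mathcomp Require Import all_boot all_order all_algebra all_field.
From mathcomp Require Import mpoly.
Set Implicit Arguments. Unset Strict Implicit. Unset Printing Implicit Defensive.
Import GRing.Theory.
Local Open Scope ring_scope.

Definition mirreducible (R : idomainType) (n : nat) (p : {mpoly R[n]}) : Prop :=
  [/\ p != 0, p \isn't a GRing.unit &
      forall a b : {mpoly R[n]}, p = a * b -> a \is a GRing.unit \/ b \is a GRing.unit].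

Definition frobenius_nonclassical (K : finFieldType) (n : nat) (F : {mpoly K[n.+1]}) : Prop :=
  exists h : {mpoly K[n.+1]},
    \sum_(i < n.+1) 'X_i ^+ #|K| * (mderiv i F) = h * F.

Definition has_smooth_rational_point (K : fieldType) (n : nat) (F : {mpoly K[n.+1]}) : Prop :=
  exists a : 'I_n.+1 -> K,
    [/\ exists i, a i != 0, F.@[a] = 0 & exists i, (mderiv i F).@[a] != 0].

(* X = {F = 0} is geometrically irreducible: over any algebraically closed
   field L containing K, the defining form is (up to a constant) a power of
   a single irreducible polynomial, i.e. its zero set is irreducible. *)
Definition geometrically_irreducible (K : fieldType) (n : nat) (F : {mpoly K[n.+1]}) : Prop :=
  forall (L : closedFieldType) (f : {rmorphism K -> L}),
    exists (G : {mpoly L[n.+1]}) (c : L) (m : nat),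
      [/\ mirreducible G, c != 0 & map_mpoly f F = c *: G ^+ m].

(* Over a field L containing K = F_q, the smooth rational point b lies on an
   irreducible factor A of F.  Polynomial rings over a field are factorial
   (Gauss's lemma and induction on the number of variables), and a product of
   two factors vanishing at b has zero gradient there, so A divides every factor
   of F vanishing at b; in particular A divides its conjugate under the
   coefficientwise Frobenius x |-> x^q, which preserves the size of polynomials,
   so the conjugate is a scalar multiple of A.  The monic multiple of A is then
   Frobenius-fixed and hence defined over K, and irreducibility of F over K
   forces F to be A up to a unit: F stays irreducible over L. *)

From Stdlib Require Import Classical.
From HB Require Import structures.
From mathcomp Require Import all_boot all_order all_algebra all_field.
From mathcomp Require Import pgroup abelian mpoly ring.
Set Implicit Arguments. Unset Strict Implicit. Unset Printing Implicit Defensive.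
Import GRing.Theory.
Local Open Scope ring_scope.

Section Divisibility.
Variable R : idomainType.
Implicit Types x u : R.

Definition dvdr x y : Prop := exists z, y = x * z.

Definition irreducible_elt x : Prop :=
  [/\ x != 0, x \isn't a GRing.unit &
      forall a b, x = a * b -> a \is a GRing.unit \/ b \is a GRing.unit].

Definition prime_elt x : Prop := forall a b, dvdr x (a * b) -> dvdr x a \/ dvdr x b.

Lemma irreducible_elt_neq0 x : irreducible_elt x -> x != 0.
Proof. by case. Qed.

Lemma irreducible_elt_mulr_unit x u :
  irreducible_elt x -> u \is a GRing.unit -> irreducible_elt (x * u).
Proof.
move=> [x0 xNU x_irr] uU; split.
- by rewrite mulf_neq0 //; apply: contraTneq uU => ->; rewrite unitr0.
- by rewrite (unitrMl _ uU).
move=> a b xu_ab; have /x_irr [aU|bU] : x = a * (b * u^-1).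
  by rewrite mulrA -xu_ab mulrK.
- by left.
- by right; rewrite -(divrK uU b) unitrM bU.
Qed.

End Divisibility.

Section PolyIdomain.
Variable D : idomainType.
Implicit Types (c : D) (P Q : {poly D}).

Lemma poly_drop1E P : P = drop_poly 1 P * 'X + (P`_0)%:P.
Proof.
apply/polyP => -[|i]; rewrite coefD coefMX coefC /=; first by rewrite add0r.
by rewrite coef_drop_poly addn1 addr0.
Qed.

Lemma dvdr_polyC_mulX c P : c != 0 -> dvdr c%:P (P * 'X) -> dvdr c%:P P.
Proof.
move=> c0 [W PX_cW]; have W0 : W`_0 = 0.
  have /eqP := congr1 (coefp 0) PX_cW.
  by rewrite /= coefMX coefCM eq_sym mulf_eq0 (negbTE c0) => /eqP.
exists (drop_poly 1 W); apply: (@mulIf _ 'X); first by rewrite polyX_eq0.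
by rewrite PX_cW {1}(poly_drop1E W) W0 addr0 mulrA.
Qed.

Lemma dvdr_polyC_drop1 c P : dvdr c P`_0 -> dvdr c%:P (drop_poly 1 P) -> dvdr c%:P P.
Proof.
move=> [a Pa] [Q PQ]; exists (Q * 'X + a%:P).
by rewrite {1}(poly_drop1E P) PQ Pa polyCM; ring.
Qed.

Lemma dvdr_polyC_mul_drop1 c P Q : c != 0 -> dvdr c P`_0 ->
  dvdr c%:P (P * Q) -> dvdr c%:P (drop_poly 1 P * Q).
Proof.
move=> c0 [a Pa] [W PQ]; apply: dvdr_polyC_mulX => //.
exists (W - a%:P * Q).
by rewrite mulrBr -PQ [in RHS](poly_drop1E P) Pa polyCM; ring.
Qed.

Lemma polyC_prime c : c != 0 -> prime_elt c -> prime_elt c%:P.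
Proof.
move=> c0 c_prime P Q; have [k] := ubnP (size P + size Q).
elim: k P Q => // k IH P Q /ltnSE sPQ PQ.
have [->|P0] := eqVneq P 0; first by left; exists 0; rewrite mulr0.
have [->|Q0] := eqVneq Q 0; first by right; exists 0; rewrite mulr0.
have size_drop1 (R : {poly D}) : R != 0 -> (size (drop_poly 1 R) < size R)%N.
  by move=> R0; rewrite size_drop_poly ltn_subrL size_poly_gt0 R0.
have [cP0|cNP0] := classic (dvdr c P`_0).
  have /IH[] := dvdr_polyC_mul_drop1 c0 cP0 PQ; last by right.
    by apply: leq_trans sPQ; rewrite ltn_add2r size_drop1.
  by left; apply: dvdr_polyC_drop1.
have [cQ0|cNQ0] := classic (dvdr c Q`_0).
  rewrite mulrC in PQ; have /IH[] := dvdr_polyC_mul_drop1 c0 cQ0 PQ; last by left.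
    by apply: leq_trans sPQ; rewrite addnC ltn_add2l size_drop1.
  by right; apply: dvdr_polyC_drop1.
have [W PQ_cW] := PQ; suff /c_prime[] : dvdr c (P`_0 * Q`_0) by [].
by exists W`_0; rewrite -coef0M PQ_cW coefCM.
Qed.

Lemma unit_polyC (a : D) : (a%:P \is a GRing.unit) = (a \is a GRing.unit).
Proof.
rewrite poly_unitE size_polyC coefC /=.
by have [->|//] := eqVneq a 0; rewrite unitr0.
Qed.

Lemma irreducible_polyC (a : D) : irreducible_elt a%:P -> irreducible_elt a.
Proof.
move=> [a0 aNU a_fact]; split; first by rewrite -polyC_eq0.
  by rewrite -unit_polyC.
by move=> x y a_xy; rewrite -!unit_polyC; apply: a_fact; rewrite a_xy polyCM.
Qed.

Lemma modp_scale_sub (H G : {poly D}) :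
  exists2 c, c != 0 & H %% G = c *: H - (H %/ G) * G.
Proof.
exists (lead_coef G ^+ scalp H G); first exact: Pdiv.Idomain.lc_expn_scalp_neq0.
by rewrite Pdiv.Idomain.divp_eq addrC addKr.
Qed.

End PolyIdomain.

Section GaussLemma.
Variables (D : idomainType) (mu : D -> nat).
Hypothesis mu_mul_nonunit : forall a b : D,
  a != 0 -> a \isn't a GRing.unit -> b != 0 -> (mu b < mu (a * b))%N.
Hypothesis irreducible_prime : forall x : D, irreducible_elt x -> prime_elt x.

Lemma irreducible_factor (Z : D -> Prop) (c : D) :
  (forall a b, Z (a * b) -> Z a \/ Z b) ->
  c != 0 -> c \isn't a GRing.unit -> Z c ->
  exists q c', [/\ irreducible_elt q, Z q & c = q * c'].
Proof.
move=> Z_mul; have [k] := ubnP (mu c); elim: k c => // k IH c /ltnSE mu_c c0 cNU Zc.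
have [c_irr|c_red] := classic (irreducible_elt c); first by exists c, 1; rewrite mulr1.
have [a [b [c_ab aNU bNU]]] : exists a b,
    [/\ c = a * b, a \isn't a GRing.unit & b \isn't a GRing.unit].
  apply: NNPP => c_nfact; apply: c_red; split=> // a b c_ab.
  by apply: NNPP => /not_or_and[/negP aNU /negP bNU]; apply: c_nfact; exists a, b.
have a0 : a != 0 by apply: contraNneq c0 => a0; rewrite c_ab a0 mul0r.
have b0 : b != 0 by apply: contraNneq c0 => b0; rewrite c_ab b0 mulr0.
have [Za|Zb] : Z a \/ Z b by apply: Z_mul; rewrite -c_ab.
  have [|q [a' [q_irr Zq a_qa']]] := IH a _ a0 aNU Za.
    by apply: leq_trans mu_c; rewrite c_ab mulrC mu_mul_nonunit.
  by exists q, (a' * b); rewrite c_ab a_qa' mulrA.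
have [|q [b' [q_irr Zq b_qb']]] := IH b _ b0 bNU Zb.
  by apply: leq_trans mu_c; rewrite c_ab mu_mul_nonunit.
by exists q, (a * b'); rewrite c_ab b_qb' mulrCA.
Qed.

(* Gauss's lemma: [c] is peeled off one irreducible, hence prime, factor at a time. *)
Lemma polyC_mul_split (c : D) (P G M : {poly D}) : c != 0 -> c%:P * P = G * M ->
  exists a b G' M', [/\ G = a%:P * G', M = b%:P * M' & P = G' * M'].
Proof.
have [k] := ubnP (mu c); elim: k c P G M => // k IH c P G M /ltnSE mu_c c0 cP_GM.
have [cU|cNU] := boolP (c \is a GRing.unit).
  exists c, 1, (c^-1%:P * G), M; split; first by rewrite mulrA -polyCM mulrV ?mul1r.
    by rewrite mul1r.
  by rewrite -mulrA -cP_GM mulrA -polyCM mulVr ?mul1r.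
have [q [c' [q_irr _ c_qc']]] :=
  @irreducible_factor (fun=> True) c (fun _ _ _ => or_introl I) c0 cNU I.
have c'0 : c' != 0 by apply: contraNneq c0 => c'0; rewrite c_qc' c'0 mulr0.
have q0 : q%:P != 0 by rewrite polyC_eq0 irreducible_elt_neq0.
have mu_c' : (mu c' < k)%N.
  by apply: leq_trans mu_c; rewrite c_qc' mu_mul_nonunit //; case: q_irr.
have qP_prime := polyC_prime (irreducible_elt_neq0 q_irr) (irreducible_prime q_irr).
have [|[G0 G_qG0]|[M0 M_qM0]] := qP_prime G M.
- by exists (c'%:P * P); rewrite -cP_GM c_qc' polyCM mulrA.
- have [|a [b [G' [M' [G0_aG' M_bM' P_GM']]]]] := IH c' P G0 M mu_c' c'0.
    by apply: (mulfI q0); rewrite mulrA -polyCM -c_qc' cP_GM G_qG0 mulrA.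
  by exists (q * a), b, G', M'; rewrite G_qG0 G0_aG' polyCM mulrA.
- have [|a [b [G' [M' [G_aG' M0_bM' P_GM']]]]] := IH c' P G M0 mu_c' c'0.
    by apply: (mulfI q0); rewrite mulrA -polyCM -c_qc' cP_GM M_qM0 mulrCA.
  by exists a, (q * b), G', M'; rewrite M_qM0 M0_bM' polyCM mulrA.
Qed.

Lemma irreducible_dvdr_polyC_mul (A P T : {poly D}) (c : D) :
  irreducible_elt A -> (1 < size A)%N -> c != 0 -> c%:P * P = A * T -> dvdr A P.
Proof.
move=> [A0 _ A_fact] sA c0 cP_AT.
have [a [b [A' [T' [A_aA' _ P_AT']]]]] := polyC_mul_split c0 cP_AT.
have a0 : a != 0 by apply: contraNneq A0 => a0; rewrite A_aA' a0 mul0r.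
have [|A'U] := A_fact _ _ A_aA'; last first.
  by move: sA; rewrite A_aA' size_Cmul // (eqP (andP A'U).1).
rewrite unit_polyC => aU; exists (a^-1%:P * T').
by rewrite P_AT' A_aA' mulrCA !mulrA -polyCM mulVr ?mul1r.
Qed.

(* Euclid's algorithm by pseudo-division, run on the ideal generated by [A] and [P]. *)
Lemma irreducible_dvdr_or_polyC_comb (A P : {poly D}) :
  irreducible_elt A -> (1 < size A)%N ->
  dvdr A P \/ exists c U V, c != 0 /\ c%:P = U * A + V * P.
Proof.
move=> A_irr sA; have [A0 _ A_fact] := A_irr.
pose comb H := exists U V, H = U * A + V * P.
suff: forall G, G != 0 -> comb G ->
    dvdr A P \/ exists c U V, c != 0 /\ c%:P = U * A + V * P.
  by move=> /(_ A A0); apply; exists 1, 0; rewrite mul1r mul0r addr0.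
move=> G; have [k] := ubnP (size G); elim: k G => // k IH G /ltnSE sG G0 [U [V G_UV]].
have descend H : comb H -> H %% G != 0 ->
    dvdr A P \/ exists c U V, c != 0 /\ c%:P = U * A + V * P.
  move=> [U' [V' H_UV]] rH0; apply: IH rH0 _.
    by apply: leq_trans sG; apply: Pdiv.Idomain.ltn_modpN0.
  have [c _ ->] := modp_scale_sub H G.
  exists (c%:P * U' - (H %/ G) * U), (c%:P * V' - (H %/ G) * V).
  by move: (H %/ G) => q; rewrite H_UV G_UV -mul_polyC; ring.
have [c c0 A_mod] := modp_scale_sub A G.
have [rA0|rA] := eqVneq (A %% G) 0; last first.
  by apply: descend rA; exists 1, 0; rewrite mul1r mul0r addr0.
have cA_GQ : c%:P * A = G * (A %/ G).
  by apply/eqP; rewrite -subr_eq0 mul_polyC (mulrC G) -A_mod rA0.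
have [a [b [G' [M' [G_aG' _ A_GM']]]]] := polyC_mul_split c0 cA_GQ.
have a0 : a != 0 by apply: contraNneq G0 => a0; rewrite G_aG' a0 mul0r.
have [G'U|M'U] := A_fact _ _ A_GM'.
  have [sG' G'0U] := andP G'U; right; exists (a * G'`_0), U, V; split.
    by rewrite mulf_neq0 //; apply: contraTneq G'0U => ->; rewrite unitr0.
  by rewrite -G_UV G_aG' polyCM; congr (_ * _); exact/esym/size1_polyC/eq_leq/eqP.
have [d d0 P_mod] := modp_scale_sub P G.
have [rP0|rP] := eqVneq (P %% G) 0; last first.
  by apply: descend rP; exists 0, 1; rewrite mul0r add0r mul1r.
left; apply: (@irreducible_dvdr_polyC_mul A P (M'^-1 * a%:P * (P %/ G)) d) => //.
have dP_GQ : d%:P * P = G * (P %/ G).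
  by apply/eqP; rewrite -subr_eq0 mul_polyC (mulrC G) -P_mod rP0.
by rewrite dP_GQ G_aG' A_GM' !mulrA (mulrK M'U) (mulrC a%:P).
Qed.

Lemma poly_irreducible_prime (A : {poly D}) : irreducible_elt A -> prime_elt A.
Proof.
move=> A_irr P Q [W PQ_AW]; have [sA|sA] := leqP (size A) 1.
  have A_C := size1_polyC sA; have a_irr : irreducible_elt A`_0.
    by apply: irreducible_polyC; rewrite -A_C.
  have a_prime := polyC_prime (irreducible_elt_neq0 a_irr) (irreducible_prime a_irr).
  by rewrite A_C; apply: a_prime; exists W; rewrite -A_C.
have [|[c [U [V [c0 c_UV]]]]] := irreducible_dvdr_or_polyC_comb P A_irr sA; first by left.
right; apply: (@irreducible_dvdr_polyC_mul A Q (U * Q + V * W) c) => //.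
by rewrite c_UV mulrDl -(mulrA V) PQ_AW; ring.
Qed.

End GaussLemma.

Section RingIsoTransfer.
Variables (R S : idomainType) (f : {rmorphism R -> S}) (g : {rmorphism S -> R}).
Hypotheses (fK : cancel f g) (gK : cancel g f).

Lemma irreducible_elt_rmorph x : irreducible_elt x -> irreducible_elt (f x).
Proof.
move=> [x0 xNU x_fact]; split.
- by apply: contraNneq x0 => fx0; rewrite -(fK x) fx0 rmorph0.
- by apply: contraNN xNU => /(rmorph_unit g); rewrite fK.
move=> a b fx_ab; have /x_fact[] : x = g a * g b by rewrite -rmorphM -fx_ab fK.
  by move=> /(rmorph_unit f); rewrite gK; left.
by move=> /(rmorph_unit f); rewrite gK; right.
Qed.

Lemma prime_elt_rmorph x : prime_elt (f x) -> prime_elt x.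
Proof.
move=> fx_prime a b [c ab_xc].
have pull y : dvdr (f x) (f y) -> dvdr x y.
  by move=> [d fy_xd]; exists (g d); rewrite -[y]fK fy_xd rmorphM fK.
have /fx_prime[] : dvdr (f x) (f a * f b) by exists (f c); rewrite -!rmorphM ab_xc.
  by move/pull; left.
by move/pull; right.
Qed.

End RingIsoTransfer.

Lemma mpoly_rmorph_eq (n : nat) (R : comNzRingType) (S : nzRingType)
    (phi psi : {rmorphism {mpoly R[n]} -> S}) :
  (forall c, phi c%:MP = psi c%:MP) -> (forall i, phi 'X_i = psi 'X_i) -> phi =1 psi.
Proof.
move=> eqC eqX p; rewrite (mpolyE p) !rmorph_sum; apply: eq_bigr => m _.
rewrite -mul_mpolyC !rmorphM eqC mpolyXE_id !rmorph_prod; congr (_ * _).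
by apply: eq_bigr => i _; rewrite !rmorphXn eqX.
Qed.

Section MPolyUni.
Variables (n : nat) (R : comNzRingType).

Lemma muni_Xmax : muni ('X_ord_max : {mpoly R[n.+1]}) = 'X.
Proof.
rewrite /muni mmapX mmap1U /=; case: splitP => // j /= nj.
by have := ltn_ord j; rewrite -nj ltnn.
Qed.

Lemma muni_Xwiden (i : 'I_n) :
  muni ('X_(widen_ord (leqnSn n) i) : {mpoly R[n.+1]}) = ('X_i)%:P.
Proof.
rewrite /muni mmapX mmap1U /=; case: splitP => [j /= ij|j].
  by congr ('X__)%:P; apply/val_inj.
by rewrite ord1 /= addn0 => /eqP; rewrite ltn_eqF.
Qed.

Lemma mmultiE (p : {poly {mpoly R[n]}}) :
  mmulti p = (map_poly (@mwiden n R) p).['X_ord_max].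
Proof.
rewrite /mmulti horner_coef size_map_inj_poly ?mwiden0 //; last exact: inj_mwiden.
by apply: eq_bigr => i _; rewrite coef_map.
Qed.

Lemma mmulti_is_zmod_morphism : zmod_morphism (@mmulti n R).
Proof. by move=> p q; rewrite !mmultiE rmorphB hornerD hornerN. Qed.

HB.instance Definition _ := GRing.isZmodMorphism.Build
  {poly {mpoly R[n]}} {mpoly R[n.+1]} (@mmulti n R) mmulti_is_zmod_morphism.

Lemma mmulti_is_monoid_morphism : monoid_morphism (@mmulti n R).
Proof. by split => [|p q]; rewrite !mmultiE (rmorph1, rmorphM) (hornerC, hornerM). Qed.

HB.instance Definition _ := GRing.isMonoidMorphism.Build
  {poly {mpoly R[n]}} {mpoly R[n.+1]} (@mmulti n R) mmulti_is_monoid_morphism.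

Lemma muni_mwiden (c : {mpoly R[n]}) : muni (mwiden c) = c%:P.
Proof.
apply: (mpoly_rmorph_eq (phi := @muni n R \o @mwiden n R) (psi := polyC)) => [d|i] /=.
  by rewrite mwidenC muniC.
by rewrite mwidenX mnmwiden1 muni_Xwiden.
Qed.

Lemma mmultiK : cancel (@mmulti n R) (@muni n R).
Proof.
move=> p; rewrite /mmulti rmorph_sum -[RHS]coefK poly_def; apply: eq_bigr => i _.
by rewrite rmorphM rmorphXn /= muni_mwiden muni_Xmax mul_polyC.
Qed.

Lemma muniK : cancel (@muni n R) (@mmulti n R).
Proof.
apply: (mpoly_rmorph_eq (phi := @mmulti n R \o @muni n R) (psi := idfun)) => [c|i] /=.
  by rewrite muniC mmultiE map_polyC hornerC; exact: mwidenC.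
have [[j ->]|->] : (exists j, i = widen_ord (leqnSn n) j) \/ i = ord_max.
- have [lt_in|le_ni] := ltnP i n; [left; exists (Ordinal lt_in) | right].
    exact: val_inj.
  by apply/val_inj/eqP; rewrite /= eqn_leq le_ni -ltnS ltn_ord.
- by rewrite muni_Xwiden mmultiE map_polyC hornerC /= mwidenX mnmwiden1.
- by rewrite muni_Xmax mmultiE map_polyX hornerX.
Qed.

End MPolyUni.

Section MPolyPrime.
Variable L : fieldType.

Lemma mpoly_unit_msize n (a : {mpoly L[n]}) :
  a != 0 -> (msize a <= 1)%N -> a \is a GRing.unit.
Proof.
move=> a0 /msize1_polyC a_C; apply/andP; split; first by rewrite -a_C.
by rewrite unitfE; apply: contraNneq a0 => a00; rewrite a_C a00.
Qed.

Lemma msize_mul_nonunit n (a b : {mpoly L[n]}) :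
  a != 0 -> a \isn't a GRing.unit -> b != 0 -> (msize b < msize (a * b))%N.
Proof.
move=> a0 aNU b0; rewrite msizeM // -subn1 ltn_subRL ltn_add2r ltnNge.
by apply: contraNN aNU; apply: mpoly_unit_msize.
Qed.

Theorem mpoly_irreducible_prime n (A : {mpoly L[n]}) :
  irreducible_elt A -> prime_elt A.
Proof.
elim: n A => [|n IH] A A_irr.
  case: A_irr => A0 ANU _; case/negP: ANU; apply: mpoly_unit_msize => //.
  by rewrite (nvar0_mpolyC A) msizeC; case: eqP.
apply: (prime_elt_rmorph (@muniK n L)).
apply: (poly_irreducible_prime (@msize_mul_nonunit n) IH).
exact: irreducible_elt_rmorph (@muniK n L) (@mmultiK n L) _ A_irr.
Qed.

End MPolyPrime.

Section MapMPoly.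
Variables (R S : comNzRingType) (g : {rmorphism R -> S}) (n : nat).
Hypothesis g_inj : injective g.
Implicit Types p q : {mpoly R[n]}.

Lemma meval_map_mpoly (v : 'I_n -> R) p :
  (map_mpoly g p).@[fun i => g (v i)] = g p.@[v].
Proof.
apply: (mpoly_rmorph_eq (phi := meval (fun i => g (v i)) \o map_mpoly g)
                        (psi := g \o meval v)) => [c|i] /=.
  by rewrite map_mpolyC !mevalC.
by rewrite map_mpolyX !mevalXU.
Qed.

Lemma mderiv_map_mpoly i p : mderiv i (map_mpoly g p) = map_mpoly g (mderiv i p).
Proof.
by apply/mpolyP => m; rewrite mcoeff_mderiv !mcoeff_map_mpoly mcoeff_mderiv raddfMn.
Qed.

Lemma map_mpoly_inj : injective (@map_mpoly n R S g).
Proof.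
move=> p q gp_gq; apply/mpolyP => m; apply: g_inj.
by rewrite -!mcoeff_map_mpoly gp_gq.
Qed.

Lemma msize_map_mpoly p : msize (map_mpoly g p) = msize p.
Proof. by rewrite !msizeE (perm_big _ (msupp_map_mpoly _ g_inj)). Qed.

End MapMPoly.

Section SmoothPoint.
Variables (L : fieldType) (n : nat) (b : 'I_n -> L).
Implicit Types A B C P Q : {mpoly L[n]}.

Lemma unit_meval_neq0 P : P \is a GRing.unit -> P.@[b] != 0.
Proof. by move=> /(rmorph_unit (meval b)); rewrite unitfE. Qed.

Lemma mderiv_meval_mul_vanish j A B C :
  A.@[b] = 0 -> B.@[b] = 0 -> (mderiv j (A * B * C)).@[b] = 0.
Proof.
move=> Ab Bb; rewrite !(mderivM, mevalD, mevalM) Ab Bb.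
by rewrite !(mul0r, mulr0, add0r).
Qed.

Lemma vanishing_irreducible_factor P : P != 0 -> P.@[b] = 0 ->
  exists A Q, [/\ irreducible_elt A, A.@[b] = 0 & P = A * Q].
Proof.
move=> P0 Pb; apply: (irreducible_factor (@msize_mul_nonunit L n)) => //.
- by move=> Q R; rewrite mevalM => /eqP; rewrite mulf_eq0 => /orP[]/eqP; [left|right].
- by apply/negP => /unit_meval_neq0; rewrite Pb eqxx.
Qed.

Lemma smooth_irreducible_dvdr j P A B : (mderiv j P).@[b] != 0 ->
  irreducible_elt A -> dvdr A P -> A.@[b] = 0 -> dvdr B P -> B.@[b] = 0 -> dvdr A B.
Proof.
move=> dPb A_irr A_P Ab [Q P_BQ] Bb; rewrite P_BQ in A_P.
have [//|[R Q_AR]] := mpoly_irreducible_prime A_irr A_P.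
by case/eqP: dPb; rewrite P_BQ Q_AR mulrA mderiv_meval_mul_vanish.
Qed.

End SmoothPoint.

Section FrobeniusDescent.
Variables (K : finFieldType) (L : fieldType) (f : {rmorphism K -> L}).

Definition frobq (x : L) : L := x ^+ #|K|.

Lemma pchar_nat_card : [pchar L].-nat #|K|.
Proof.
have [p _ pK] := finPcharP K; rewrite (eq_pnat _ (pcharf_eq (rmorph_pchar f pK))).
by have := abelem_pgroup (fin_ring_pchar_abelem pK); rewrite /pgroup cardsT.
Qed.

Lemma frobq_is_zmod_morphism : zmod_morphism frobq.
Proof.
by move=> x y; rewrite /frobq exprDn_pchar ?exprNn_pchar // pchar_nat_card.
Qed.

HB.instance Definition _ :=
  GRing.isZmodMorphism.Build L L frobq frobq_is_zmod_morphism.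

Lemma frobq_is_monoid_morphism : monoid_morphism frobq.
Proof. by split => [|x y]; rewrite /frobq ?expr1n ?exprMn. Qed.

HB.instance Definition _ :=
  GRing.isMonoidMorphism.Build L L frobq frobq_is_monoid_morphism.

Lemma frobq_rmorph k : frobq (f k) = f k.
Proof. by rewrite /frobq -rmorphXn expf_card. Qed.

(* The fixed points of [frobq] are the roots of [X^q - X = \prod_(k : K) (X - k)]. *)
Lemma frobq_fixed x : frobq x = x -> exists k, f k = x.
Proof.
move=> x_fixed; have := congr1 (fun p => (map_poly f p).[x]) (finField_genPoly K).
rewrite /= rmorphB /= map_polyXn map_polyX !hornerE -/(frobq x) x_fixed subrr.
rewrite rmorph_prod horner_prod => /esym/eqP/prodf_eq0[k _].
by rewrite /= map_polyXsubC hornerXsubC subr_eq0 => /eqP->; exists k.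
Qed.

Lemma map_mpoly_frobq_fixed n (P : {mpoly L[n]}) :
  map_mpoly frobq P = P -> exists P0, P = map_mpoly f P0.
Proof.
move=> P_fixed; have coef_fixed m : frobq P@_m = P@_m.
  by rewrite -mcoeff_map_mpoly P_fixed.
pose pre y : K := odflt 0 [pick k | f k == y].
have preK m : f (pre P@_m) = P@_m.
  rewrite /pre; case: pickP => [k /eqP //|no_pre].
  by have [k /eqP] := frobq_fixed (coef_fixed m); rewrite no_pre.
exists (\sum_(m <- msupp P) pre P@_m *: 'X_[m]).
rewrite raddf_sum /= [LHS]mpolyE; apply: eq_bigr => m _.
by rewrite map_mpolyZ map_mpolyX preK.
Qed.

(* [C] is a constant because the Frobenius twist preserves [msize]. *)
Lemma map_mpoly_frobq_normalize n (A C : {mpoly L[n]}) : A != 0 ->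
  map_mpoly frobq A = A * C ->
  map_mpoly frobq ((mleadc A)^-1 *: A) = (mleadc A)^-1 *: A.
Proof.
move=> A0 sA_AC; have C0 : C != 0.
  apply: contraNneq A0 => C0; apply/eqP/(map_mpoly_inj (fmorph_inj frobq)).
  by rewrite sA_AC C0 mulr0 rmorph0.
have /msize_poly1P[c c0 C_c] : msize C == 1%N.
  move: (msize_map_mpoly (fmorph_inj frobq) A); rewrite sA_AC msizeM //.
  rewrite (mpolySpred _ C0) (mpolySpred _ A0) addnS /=.
  by move=> /eqP; rewrite -[X in _ == X]addn0 eqn_add2l => /eqP->.
have frobq_coef m : A@_m ^+ #|K| = c * A@_m.
  by have := congr1 (mcoeff m) sA_AC; rewrite mcoeff_map_mpoly C_c mulrC mcoeffCM.
have l0 : mleadc A != 0 by rewrite mleadc_eq0.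
apply/mpolyP => m; rewrite mcoeff_map_mpoly !mcoeffZ /= /frobq exprMn exprVn.
by rewrite !frobq_coef invfM mulrACA mulVf // mul1r.
Qed.

Lemma map_mpoly_frobq_rmorph n (P : {mpoly K[n]}) :
  map_mpoly frobq (map_mpoly f P) = map_mpoly f P.
Proof. by apply/mpolyP => m; rewrite !mcoeff_map_mpoly /= frobq_rmorph. Qed.

(* The normalized factor [A'] and its cofactor are Frobenius-fixed, hence come from
   a factorization of [F] over [K]. *)
Lemma frobq_stable_factor_irreducible n (F : {mpoly K[n]}) (A W : {mpoly L[n]}) :
  irreducible_elt F -> irreducible_elt A -> map_mpoly f F = A * W ->
  dvdr A (map_mpoly frobq A) -> irreducible_elt (map_mpoly f F).
Proof.
move=> [_ _ F_fact] A_irr FL_AW [C sA_AC]; have A0 := irreducible_elt_neq0 A_irr.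
have l0 : mleadc A != 0 by rewrite mleadc_eq0.
have lU : ((mleadc A)^-1)%:MP_[n] \is a GRing.unit.
  by rewrite (rmorph_unit (@mpolyC n L)) // unitfE invr_eq0.
set A' := (mleadc A)^-1 *: A; set B := mleadc A *: W.
have A'_A : A' = A * ((mleadc A)^-1)%:MP by rewrite mulrC mul_mpolyC.
have A'0 : A' != 0 by rewrite scaler_eq0 invr_eq0 negb_or l0.
have FL_A'B : map_mpoly f F = A' * B.
  by rewrite FL_AW -scalerAl -scalerAr scalerA mulVf ?scale1r.
have sA' : map_mpoly frobq A' = A' := map_mpoly_frobq_normalize A0 sA_AC.
have sB : map_mpoly frobq B = B.
  apply: (mulfI A'0); rewrite -FL_A'B -[in LHS]sA' -rmorphM -FL_A'B.
  exact: map_mpoly_frobq_rmorph.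
have [[G A'_G] [H B_H]] := (map_mpoly_frobq_fixed sA', map_mpoly_frobq_fixed sB).
have F_GH : F = G * H.
  by apply: (map_mpoly_inj (fmorph_inj f)); rewrite rmorphM /= -A'_G -B_H -FL_A'B.
have [GU|HU] := F_fact _ _ F_GH.
  case: A_irr => _ /negP[]; have := rmorph_unit (map_mpoly f) GU.
  by rewrite /= -A'_G A'_A unitrM lU andbT.
rewrite FL_A'B B_H A'_A -mulrA; apply: irreducible_elt_mulr_unit A_irr _.
by rewrite unitrM lU (rmorph_unit _ HU).
Qed.

Theorem irreducible_map_mpoly_smooth n (F : {mpoly K[n]}) (a : 'I_n -> K) (j : 'I_n) :
  irreducible_elt F -> F.@[a] = 0 -> (mderiv j F).@[a] != 0 ->
  irreducible_elt (map_mpoly f F).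
Proof.
move=> F_irr Fa dFa; pose b i := f (a i).
have FL0 : map_mpoly f F != 0.
  apply: contraNneq (irreducible_elt_neq0 F_irr) => FL0.
  by apply/eqP/(map_mpoly_inj (fmorph_inj f)); rewrite FL0 rmorph0.
have FLb : (map_mpoly f F).@[b] = 0 by rewrite meval_map_mpoly Fa rmorph0.
have dFLb : (mderiv j (map_mpoly f F)).@[b] != 0.
  by rewrite mderiv_map_mpoly meval_map_mpoly fmorph_eq0.
have [A [W [A_irr Ab FL_AW]]] := vanishing_irreducible_factor FL0 FLb.
apply: (frobq_stable_factor_irreducible F_irr A_irr FL_AW).
apply: (smooth_irreducible_dvdr dFLb A_irr _ Ab); first by exists W.
  exists (map_mpoly frobq W).
  by rewrite -rmorphM -FL_AW; apply/esym/map_mpoly_frobq_rmorph.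
have frobq_b : (fun i => frobq (b i)) =1 b by move=> i; apply: frobq_rmorph.
by rewrite -(meval_eq _ frobq_b) meval_map_mpoly Ab rmorph0.
Qed.

End FrobeniusDescent.

Theorem lemma2p6 (K : finFieldType) (n d : nat) (F : {mpoly K[n.+1]}) :
  F \is d.-homog ->
  mirreducible F ->
  frobenius_nonclassical F ->
  has_smooth_rational_point F ->
  geometrically_irreducible F.
Proof.
move=> _ F_irr _ [a [_ Fa [j dFa]]] L f.
exists (map_mpoly f F), 1, 1; split; rewrite ?oner_neq0 ?scale1r ?expr1 //.
exact: irreducible_map_mpoly_smooth F_irr Fa dFa.
Qed.
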